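(* For integers $n\ge0$ and $k\ge0$ define $$F(n,k)=(-1)^k(4n+1)\frac{(\frac12)_n^3(\frac12)_{n+k}}{(1)_n^3\,(1)_{n-k}\,(\frac12)_k^2},\qquad G(n,k)=(-1)^{k-1}\frac{4(\frac12)_n^3(\frac12)_{n+k-1}}{(1)_{n-1}^3\,(1)_{n-k}\,(\frac12)_k^2},$$ with the convention $1/(1)_j=0$ for negative integers $j$ (so $F(n,k)=0$ for $k>n$ and $G(0,k)=0$ for $k>0$). Then for every $n\in\mathbb N$ and every positive integer $k$, $$(2k-1)F(n,k-1)-2kF(n,k)=G(n+1,k)-G(n,k),$$ and for every $m\in\mathbb N$, $$\sum_{n=0}^{m}F(n,0)=\frac{4^m}{\binom{2m}{m}}F(m,m)+\sum_{k=1}^m\frac{4^{k-1}\,G(m+1,k)}{(2k-1)\binom{2k-2}{k-1}}.$$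
   Context: $(x)_k=x(x+1)\cdots(x+k-1)$ is the Pochhammer symbol, with $(x)_0=1$; $(1)_j=j!$ for $j\ge0$. *)

From mathcomp Require Import all_boot all_order all_algebra.
Set Implicit Arguments. Unset Strict Implicit. Unset Printing Implicit Defensive.
Import Order.TTheory GRing.Theory Num.Theory.
Local Open Scope ring_scope.

Definition poch (x : rat) (k : nat) : rat := \prod_(i < k) (x + i%:R).

Definition invpoch1 (j : int) : rat :=
  match j with
  | Posz m => (poch 1 m)^-1
  | Negz _ => 0
  end.

Definition F (n k : nat) : rat :=
  (-1) ^+ k * (4 * n%:R + 1) * poch (1/2) n ^+ 3 * poch (1/2) (n + k)
  * invpoch1 (n%:Z) ^+ 3 * invpoch1 (n%:Z - k%:Z) / poch (1/2) k ^+ 2.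

(* The index n+k-1 is only negative for n = k = 0, where the factor
   1/(1)_{-1}^3 = 0 makes G vanish anyway; we use truncated n+k-1 there. *)
Definition G (n k : nat) : rat :=
  (-1) ^ (k%:Z - 1) * 4 * poch (1/2) n ^+ 3 * poch (1/2) (n + k).-1
  * invpoch1 (n%:Z - 1) ^+ 3 * invpoch1 (n%:Z - k%:Z) / poch (1/2) k ^+ 2.

From mathcomp Require Import all_boot all_order all_algebra.
From mathcomp Require Import zify ring lra.
Import Order.TTheory GRing.Theory Num.Theory.
Local Open Scope ring_scope.

(* (F, G) is a WZ-type pair.
   The second claim follows by summation by parts in k.  With the weights
     c_k = 4^k / C(2k,k)   and   w_k = 4^(k-1) / ((2k-1) C(2k-2,k-1))
   (cweight and wweight below),
   which satisfy (2k+1) w_(k+1) = c_k and (2k+2) w_(k+1) = c_(k+1), the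
   recurrence telescopes to  F(n,0) - c_m F(n,m) = sum_k w_k (G(n+1,k) - G(n,k)).
   Summing over 0 <= n <= m, the terms c_m F(n,m) with n < m vanish, and the
   inner sums over n telescope to w_k G(m+1,k) because G(0,k) = 0. *)

Lemma pochS x n : poch x n.+1 = poch x n * (x + n%:R).
Proof. by rewrite /poch big_ord_recr. Qed.

Lemma poch_neq0 {x} n : 0 < x -> poch x n != 0.
Proof.
move=> x_gt0; apply: lt0r_neq0; apply: prodr_gt0 => i _.
by have := ler0n rat i; lra.
Qed.

Lemma invpoch1_nat z m : z = Posz m -> invpoch1 z = (poch 1 m)^-1.
Proof. by move->. Qed.

Lemma invpoch1_neg z : z < 0 -> invpoch1 z = 0.
Proof. by case: z. Qed.

Lemma F_vanish n k : (n < k)%N -> F n k = 0.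
Proof. by move=> lt_nk; rewrite /F (@invpoch1_neg (n%:Z - k%:Z)); [ring | lia]. Qed.

Lemma G_vanish n k : (n < k)%N -> G n k = 0.
Proof. by move=> lt_nk; rewrite /G (@invpoch1_neg (n%:Z - k%:Z)); [ring | lia]. Qed.

Lemma G0 k : G 0 k = 0.
Proof. by rewrite /G (@invpoch1_neg (0%:Z - 1)) //; ring. Qed.

Lemma G_sign j : (-1 : rat) ^ (j.+1%:Z - 1) = (-1) ^+ j.
Proof. by rewrite (_ : j.+1%:Z - 1 = j%:Z); last lia. Qed.

Lemma recurrence_interior j d :
  (2 * j.+1%:R - 1) * F (j + d).+1 j - 2 * j.+1%:R * F (j + d).+1 j.+1
  = G (j + d).+2 j.+1 - G (j + d).+1 j.+1.
Proof.
rewrite /F /G !G_sign.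
rewrite (@invpoch1_nat ((j + d).+1%:Z - j%:Z) d.+1); last by lia.
rewrite (@invpoch1_nat ((j + d).+1%:Z - j.+1%:Z) d); last by lia.
rewrite (@invpoch1_nat ((j + d).+2%:Z - 1) (j + d).+1); last by lia.
rewrite (@invpoch1_nat ((j + d).+2%:Z - j.+1%:Z) d.+1); last by lia.
rewrite (@invpoch1_nat ((j + d).+1%:Z - 1) (j + d)); last by lia.
rewrite !(addSn, addnS) /= !pochS [(-1) ^+ j.+1]exprS.
have h2 : 0 < 1 / 2 :> rat by []; have h1 : 0 < 1 :> rat by [].
have p1 := poch_neq0 j h2; have p2 := poch_neq0 (j + d) h2.
have p3 := poch_neq0 (j + d + j) h2.
have p4 := poch_neq0 d h1; have p5 := poch_neq0 (j + d) h1.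
field; have hj := ler0n rat j; have hd := ler0n rat d.
rewrite ?p1 ?p2 ?p3 ?p4 ?p5 //=; lra.
Qed.

Lemma recurrence_boundary n :
  (2 * n.+1%:R - 1) * F n n - 2 * n.+1%:R * F n n.+1 = G n.+1 n.+1 - G n n.+1.
Proof.
rewrite (@F_vanish n n.+1) // (@G_vanish n n.+1) // /F /G G_sign.
rewrite (@invpoch1_nat (n%:Z - n%:Z) 0); last by lia.
rewrite (@invpoch1_nat (n.+1%:Z - 1) n); last by lia.
rewrite (@invpoch1_nat (n.+1%:Z - n.+1%:Z) 0); last by lia.
rewrite !(addSn, addnS) /= !pochS.
have h2 : 0 < 1 / 2 :> rat by []; have h1 : 0 < 1 :> rat by [].
have p0 := poch_neq0 0 h1; have p1 := poch_neq0 n h2.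
have p2 := poch_neq0 (n + n) h2; have p3 := poch_neq0 n h1.
field; have hn := ler0n rat n.
rewrite ?p0 ?p1 ?p2 ?p3 //=; lra.
Qed.

Lemma recurrence n j :
  (2 * j.+1%:R - 1) * F n j - 2 * j.+1%:R * F n j.+1 = G n.+1 j.+1 - G n j.+1.
Proof.
have [lt_jn | lt_nj | ->] := ltngtP j n.
- have [d ->] : exists d, n = (j + d).+1 by exists (n - j.+1)%N; lia.
  exact: recurrence_interior.
-
  by rewrite !F_vanish ?G_vanish //; [ring | lia | lia].
- exact: recurrence_boundary.
Qed.

Definition cweight (k : nat) : rat := 4 ^+ k / ('C(2 * k, k))%:R.
Definition wweight (k : nat) : rat :=
  4 ^+ k.-1 / ((2 * k%:R - 1) * ('C(2 * k - 2, k.-1))%:R).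

Lemma central_binomialS j :
  (j.+1 * 'C((2 * j).+2, j.+1) = 2 * (2 * j).+1 * 'C(2 * j, j))%N.
Proof.
have e1 := mul_bin_diag (2 * j).+2 j.
have e2 := mul_bin_diag (2 * j).+1 j.
have e3 := mul_bin_left (2 * j).+1 j.
rewrite /= (_ : ((2 * j).+1 - j = j.+1)%N) in e3; last by lia.
by simpl in e1, e2; nia.
Qed.

Lemma central_binomial_neq0 j : ('C(2 * j, j))%:R != 0 :> rat.
Proof. by rewrite pnatr_eq0 -lt0n bin_gt0; lia. Qed.

Lemma w_c_odd j : wweight j.+1 * (2 * j.+1%:R - 1) = cweight j.
Proof.
rewrite /wweight /cweight /= (_ : (2 * j.+1 - 2 = 2 * j)%N); last by lia.
have hb := central_binomial_neq0 j; have hj := ler0n rat j.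
by field; rewrite hb /=; apply: lt0r_neq0; lra.
Qed.

Lemma w_c_even j : wweight j.+1 * (2 * j.+1%:R) = cweight j.+1.
Proof.
have hj := ler0n rat j; have hb := central_binomial_neq0 j.
have hc : ('C(2 * j.+1, j.+1))%:R
          = 2 * (2 * j%:R + 1) * ('C(2 * j, j))%:R / j.+1%:R :> rat.
  have hj1 : j.+1%:R != 0 :> rat by rewrite pnatr_eq0.
  have := congr1 (fun m => m%:R : rat) (central_binomialS j).
  rewrite !natrM (_ : (2 * j.+1 = (2 * j).+2)%N); last by lia.
  by move=> e; rewrite -[LHS](mulKf hj1) e; ring.
rewrite /wweight /cweight hc /= (_ : (2 * j.+1 - 2 = 2 * j)%N); last by lia.
by rewrite exprS; field; rewrite hb /=; apply/andP; split; apply: lt0r_neq0; lra.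
Qed.

Lemma recurrence_summed n K :
  F n 0 - cweight K * F n K = \sum_(1 <= k < K.+1) wweight k * (G n.+1 k - G n k).
Proof.
elim: K => [|K IH].
  by rewrite big_geq // /cweight bin0 expr0 divr1 mul1r subrr.
by rewrite big_nat_recr //= -IH -recurrence -(w_c_even K) -(w_c_odd K); ring.
Qed.

Theorem mainTheorem12 :
  (forall n k : nat, (0 < k)%N ->
     (2 * k%:R - 1) * F n k.-1 - 2 * k%:R * F n k = G n.+1 k - G n k)
  /\
  (forall m : nat,
     \sum_(0 <= n < m.+1) F n 0 =
       4 ^+ m / ('C(2 * m, m))%:R * F m m
       + \sum_(1 <= k < m.+1)
           4 ^+ k.-1 * G m.+1 k / ((2 * k%:R - 1) * ('C(2 * k - 2, k.-1))%:R)).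
Proof.
split=> [n [|k] // _|m]; first exact: recurrence.
have -> : \sum_(0 <= n < m.+1) F n 0 = \sum_(0 <= n < m.+1)
   (cweight m * F n m + \sum_(1 <= k < m.+1) wweight k * (G n.+1 k - G n k)).
  by apply: eq_bigr => n _; rewrite -recurrence_summed; ring.
rewrite big_split /= -mulr_sumr big_nat_recr //= big1_seq ?add0r; last first.
  by move=> n; rewrite mem_index_iota => /andP [_ lt_nm]; rewrite F_vanish.
rewrite exchange_big_nat /=; congr (_ + _); apply: eq_bigr => k _.
by rewrite -mulr_sumr telescope_sumr // G0 subr0 /wweight mulrAC.
Qed.
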